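(* In the setting described in the context, there is a one-to-one correspondence between complex structures $J$ on $L$ (as defined in the context) and symmetric bilinear forms $\Omega:Q\times Q\to\mathbb{C}$ with positive definite real part, given by assigning to $J$ the form $$\Omega_J(\phi,\phi')=g_J(j_J(\phi),j_J(\phi'))-\mathrm{i}\,[j_J(\phi),\phi'],\qquad\phi,\phi'\in Q.$$ That is, $J\mapsto\Omega_J$ is a bijection from the set of complex structures on $L$ onto the set of symmetric bilinear forms $Q\times Q\to\mathbb{C}$ with positive definite real part.
   Context: $L$ is a finite-dimensional real vector space and $[\cdot,\cdot]:L\times L\to\mathbb{R}$ is a bilinear form such that $\omega(\xi,\xi')=\frac12[\xi,\xi']-\frac12[\xi',\xi]$ is non-degenerate. Set $M=\{\tau\in L:[\xi,\tau]=0\ \forall\xi\in L\}$ and $N=\{\tau\in L:[\tau,\xi]=0\ \forall\xi\in L\}$, and assume $L=M\oplus N$. Let $Q=L/M$ with quotient map $q:L\to Q$; $[\cdot,\cdot]$ descends to $L\times Q\to\mathbb{R}$. A complex structure on $L$ is a linear map $J:L\to L$ with $J^2=-\mathrm{id}$, $\omega(J\xi,J\tau)=\omega(\xi,\tau)$ for all $\xi,\tau$, and such that $g_J(\tau,\xi):=2\omega(\tau,J\xi)$ is positive definite. For such $J$, $j_J:Q\to L$ is the unique linear map with $q\circ j_J=\mathrm{id}_Q$ and $j_J(Q)\subseteq JM$. *)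

From HB Require Import structures.
From mathcomp Require Import all_boot all_order all_algebra.
From mathcomp Require Import reals complex.
Set Implicit Arguments. Unset Strict Implicit. Unset Printing Implicit Defensive.
Import Order.TTheory GRing.Theory Num.Theory.
Local Open Scope ring_scope.

Section Defs.
Variable R : realType.

Definition bilinear_form (V : lmodType R) (B : V -> V -> R) : Prop :=
  (forall x a u v, B x (a *: u + v) = a * B x u + B x v) /\
  (forall y a u v, B (a *: u + v) y = a * B u y + B v y).

Variable L : vectType R.
Variable B : L -> L -> R.

Definition omega (x y : L) : R := 2^-1 * B x y - 2^-1 * B y x.

Definition nondegenerate_form (w : L -> L -> R) : Prop :=
  forall x, (forall y, w x y = 0) -> x = 0.

Definition inM (t : L) : Prop := forall x, B x t = 0.
Definition inN (t : L) : Prop := forall x, B t x = 0.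

Definition direct_sum_MN : Prop :=
  (forall x, exists m n, inM m /\ inN n /\ x = m + n) /\
  (forall x, inM x -> inN x -> x = 0).

Definition linear_map (V W : lmodType R) (f : V -> W) : Prop :=
  forall a u v, f (a *: u + v) = a *: f u + f v.

Definition gJ (J : L -> L) (t x : L) : R := 2 * omega t (J x).

Definition complex_structure (J : L -> L) : Prop :=
  [/\ linear_map J,
      (forall x, J (J x) = - x),
      (forall x y, omega (J x) (J y) = omega x y) &
      (forall x, x != 0 -> 0 < gJ J x x)].

(* Q = L/M given by a quotient map q : L -> Q (linear, onto, kernel M) *)
Variable Q : vectType R.
Variable q : L -> Q.

Definition quotient_map_by_M : Prop :=
  [/\ linear_map q,
      (forall phi, exists x, q x = phi) &
      (forall x, q x = 0 <-> inM x)].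

Definition is_jJ (J : L -> L) (j : Q -> L) : Prop :=
  [/\ linear_map j,
      (forall phi, q (j phi) = phi) &
      (forall phi, exists m, inM m /\ j phi = J m)].

(* Omega is Omega_J:
   Omega(phi,phi') = g_J(j_J phi, j_J phi') - i [j_J phi, phi'],
   where [., .] : L x Q -> R is the descended form, i.e. [x, q xi'] = [x, xi']. *)
Definition is_OmegaJ (J : L -> L) (Om : Q -> Q -> R[i]) : Prop :=
  exists j, is_jJ J j /\
    forall x x' : L,
      Om (q x) (q x') =
        ((gJ J (j (q x)) (j (q x')))%:C - 'i * (B (j (q x)) x')%:C)%C.

Definition sym_bilinear_posdefRe (Om : Q -> Q -> R[i]) : Prop :=
  [/\ (forall phi phi', Om phi phi' = Om phi' phi),
      (forall phi a u v, Om phi (a *: u + v) = (a%:C * Om phi u + Om phi v)%C),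
      (forall phi a u v, Om (a *: u + v) phi = (a%:C * Om u phi + Om v phi)%C) &
      (forall phi, phi != 0 -> 0 < Re (Om phi phi))].

End Defs.

(* Both [M] and [N] are isotropic for [omega]. Given [J], positivity of [g_J] gives
   [M :&: J M = 0] and [N :&: J N = 0], so the off-diagonal part of [J] with respect to
   [L = M (+) N] is injective, hence onto; this yields the unique section [j_J : Q -> L] of [q]
   with values in [J M]. As [j_J(Q)] is isotropic, [[.,.]] is symmetric on it and [Omega_J] is a
   symmetric form whose real part is [g_J] on [j_J(Q)].
   Conversely, write [Omega = G - i H]. Representing linear forms through the nondegenerate
   [omega] gives a section [j] of [q] with [[j phi, .] = H(phi, q .)] and an isomorphism
   [S : Q -> M] with [omega(S psi, .) = G(psi, q .) / 2]. Then [L = S(Q) (+) j(Q)], and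
   [J (S psi + j phi) = j psi - S phi] is a complex structure with [Omega_J = Omega]; any [J'] with
   [Omega_J' = Omega] has [j_J' = j] and [J' S = j], hence equals [J]. *)

From HB Require Import structures.
From mathcomp Require Import all_boot all_order all_algebra.
From mathcomp Require Import boolp reals complex.
From mathcomp Require Import ring lra.
Import Order.TTheory GRing.Theory Num.Theory.
Local Open Scope ring_scope.
Set Implicit Arguments. Unset Strict Implicit.

Section LinearMaps.
Variable R : realType.

Definition linmap (V W : lmodType R) (f : V -> W) (hf : linear_map f) : {linear V -> W} :=
  HB.pack f (GRing.isLinear.Build R V W *:%R f hf).

Section Map.
Variables (V W : lmodType R) (f : V -> W).
Hypothesis hf : linear_map f.

Lemma linear_map0 : f 0 = 0. Proof. exact: (linear0 (linmap hf)). Qed.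
Lemma linear_mapD x y : f (x + y) = f x + f y. Proof. exact: (linearD (linmap hf)). Qed.
Lemma linear_mapN x : f (- x) = - f x. Proof. exact: (linearN (linmap hf)). Qed.
Lemma linear_mapB x y : f (x - y) = f x - f y. Proof. exact: (linearB (linmap hf)). Qed.

End Map.

Definition linear_form (V : lmodType R) (f : V -> R) :=
  forall a u v, f (a *: u + v) = a * f u + f v.

Section Form.
Variables (V : lmodType R) (f : V -> R).
Hypothesis hf : linear_form f.

Let hf' : linear_map (f : V -> R^o) := hf.

Lemma linear_form0 : f 0 = 0. Proof. exact: linear_map0 hf'. Qed.
Lemma linear_formD x y : f (x + y) = f x + f y. Proof. exact: (linear_mapD hf'). Qed.
Lemma linear_formN x : f (- x) = - f x. Proof. exact: (linear_mapN hf'). Qed.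
Lemma linear_formB x y : f (x - y) = f x - f y. Proof. exact: (linear_mapB hf'). Qed.

End Form.

Lemma linear_map_inj_surj (V W : vectType R) (f : V -> W) :
  linear_map f -> injective f -> \dim {:V} = \dim {:W} ->
  forall w, exists v, f v = w.
Proof.
move=> hf f_inj dimVW w; pose fl := linfun (linmap hf).
have ker0 : lker fl == 0%VS by apply/lker0P => x y; rewrite !lfunE; apply: f_inj.
have img : limg fl = fullv.
  apply/eqP; rewrite eqEdim subvf limg_dim_eq -?dimVW ?leqnn //.
  by rewrite capfv (eqP ker0).
have /memv_imgP[v _ ->] : w \in limg fl by rewrite img memvf.
by exists v; rewrite lfunE.
Qed.

Lemma nondegenerate_represents (V : vectType R) (b : V -> V -> R) :
  (forall x, linear_form (b x)) -> (forall y, linear_form (b^~ y)) ->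
  nondegenerate_form b ->
  forall f : V -> R, linear_form f -> exists x, forall y, b x y = f y.
Proof.
move=> b_r b_l b_nd f hf.
pose dual (g : V -> R) (hg : linear_form g) : 'Hom(V, R^o) :=
  linfun (linmap (hg : linear_map (g : V -> R^o))).
pose Phi x := dual _ (b_r x).
have Phi_lin : linear_map Phi.
  by move=> a u v; apply/lfunP => z; rewrite add_lfunE scale_lfunE !lfunE /= b_l.
have Phi_inj : injective Phi.
  move=> x y /lfunP Exy; apply/eqP; rewrite -subr_eq0; apply/eqP; apply: b_nd => z.
  by rewrite (linear_formB (b_l z)); have := Exy z; rewrite !lfunE /= => ->; rewrite subrr.
have dimE : \dim {:V} = \dim {:'Hom(V, R^o)} by rewrite !dimvf /dim /= muln1.
have [x /lfunP Ex] := linear_map_inj_surj Phi_lin Phi_inj dimE (dual _ hf).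
by exists x => y; have := Ex y; rewrite !lfunE.
Qed.

End LinearMaps.

Section ComplexParts.
Variable R : realType.
Local Open Scope complex_scope.

Lemma realC_subMi (a b : R) : a%:C - 'i * b%:C = a -i* b.
Proof. by apply/eqP; rewrite eq_complex /=; apply/andP; split; apply/eqP; ring. Qed.

Lemma realC_scale_add (a x y u v : R) :
  a%:C * (x +i* y) + (u +i* v) = (a * x + u) +i* (a * y + v).
Proof. by apply/eqP; rewrite eq_complex /=; apply/andP; split; apply/eqP; ring. Qed.

Lemma Re_scale_add (a : R) (z w : R[i]) :
  complex.Re (a%:C * z + w) = a * complex.Re z + complex.Re w.
Proof. by case: z w => [x y] [u v]; rewrite realC_scale_add. Qed.

Lemma Im_scale_add (a : R) (z w : R[i]) :
  complex.Im (a%:C * z + w) = a * complex.Im z + complex.Im w.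
Proof. by case: z w => [x y] [u v]; rewrite realC_scale_add. Qed.

(* [Re] in [sym_bilinear_posdefRe] is the number-field real part [Num.Theory.Re z : R[i]],
   not the projection [complex.Re z : R]. *)
Lemma Re_gt0E (z : R[i]) : (0 < Re z) = (0 < complex.Re z).
Proof. by rewrite -complexRe (_ : 0 = 0%:C) // ltcR. Qed.

End ComplexParts.

Section Setting.
Variables (R : realType) (L : vectType R) (B : L -> L -> R).
Variables (Q : vectType R) (q : L -> Q).
Hypothesis B_bilinear : bilinear_form B.
Hypothesis omega_nondeg : nondegenerate_form (omega B).
Hypothesis L_MN : direct_sum_MN B.
Hypothesis q_quotient : quotient_map_by_M B q.

Local Notation om := (omega B).
Local Notation inM := (inM B).
Local Notation inN := (inN B).

Let inv2_neq0 : 2^-1 != 0 :> R. Proof. by rewrite invr_eq0 pnatr_eq0. Qed.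

Lemma B_linear_r x : linear_form (B x).
Proof. by case: B_bilinear => Br _ a u v; apply: Br. Qed.

Lemma B_linear_l y : linear_form (B^~ y).
Proof. by case: B_bilinear => _ Bl a u v; apply: Bl. Qed.

Lemma omega_linear_r x : linear_form (om x).
Proof. by move=> a u v; rewrite /omega B_linear_r (B_linear_l x); ring. Qed.

Lemma omega_linear_l y : linear_form (om^~ y).
Proof. by move=> a u v; rewrite /omega (B_linear_r y) B_linear_l; ring. Qed.

Lemma omega_skew x y : om y x = - om x y.
Proof. by rewrite /omega; ring. Qed.

Lemma omega_inj x x' : (forall y, om x y = om x' y) -> x = x'.
Proof.
move=> Exx'; apply/eqP; rewrite -subr_eq0; apply/eqP; apply: omega_nondeg => y.
by rewrite (linear_formB (omega_linear_l y)) Exx' subrr.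
Qed.

Lemma B_omega x y : B x y = 2 * om x y + B y x.
Proof. by rewrite /omega mulrBr !mulrA divff ?pnatr_eq0 // !mul1r; ring. Qed.

Lemma omega_M m y : inM m -> om m y = 2^-1 * B m y.
Proof. by move=> Mm; rewrite /omega Mm; ring. Qed.

Lemma omega_N n y : inN n -> om n y = - (2^-1 * B y n).
Proof. by move=> Nn; rewrite /omega Nn; ring. Qed.

Lemma omega_MM m m' : inM m -> inM m' -> om m m' = 0.
Proof. by move=> Mm Mm'; rewrite omega_M // Mm' mulr0. Qed.

Lemma omega_NN n n' : inN n -> inN n' -> om n n' = 0.
Proof. by move=> Nn Nn'; rewrite omega_N // Nn' mulr0 oppr0. Qed.

Lemma q_linear : linear_map q. Proof. by case: q_quotient. Qed.
Lemma q_surj phi : exists x, q x = phi. Proof. by case: q_quotient. Qed.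
Lemma q_eq0 x : q x = 0 <-> inM x. Proof. by case: q_quotient => _ _; apply. Qed.

Lemma q_inM m : inM m -> q m = 0. Proof. by move/q_eq0. Qed.

Lemma eq_q x y : q x = q y <-> inM (x - y).
Proof.
rewrite -q_eq0 (linear_mapB q_linear).
by split=> [->|/eqP]; [rewrite subrr | rewrite subr_eq0 => /eqP].
Qed.

Lemma inM_linear a u v : inM u -> inM v -> inM (a *: u + v).
Proof. by move=> /q_eq0 qu /q_eq0 qv; apply/q_eq0; rewrite q_linear qu qv scaler0 addr0. Qed.

Lemma inMB u v : inM u -> inM v -> inM (u - v).
Proof. by move=> Mu Mv; apply/eq_q; rewrite !q_inM. Qed.

Lemma inM0 : inM 0. Proof. by apply/q_eq0; apply: linear_map0 q_linear. Qed.

Lemma inMN u : inM u -> inM (- u).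
Proof. by move=> Mu; rewrite -sub0r; apply: inMB inM0 Mu. Qed.

Lemma inN_linear a u v : inN u -> inN v -> inN (a *: u + v).
Proof. by move=> Nu Nv x; rewrite B_linear_l Nu Nv mulr0 addr0. Qed.

Lemma inNB u v : inN u -> inN v -> inN (u - v).
Proof. by move=> Nu Nv x; rewrite (linear_formB (B_linear_l x)) Nu Nv subrr. Qed.

Lemma inN0 : inN 0. Proof. by move=> x; rewrite (linear_form0 (B_linear_l x)). Qed.

Lemma B_congr_q x y y' : q y = q y' -> B x y = B x y'.
Proof.
by move/eq_q => Myy'; apply/eqP; rewrite -subr_eq0 -(linear_formB (B_linear_r x)) Myy'.
Qed.

Lemma lift_uniq k k' : q k = q k' -> B k =1 B k' -> k = k'.
Proof. by move=> Ekk' EB; apply: omega_inj => y; rewrite /omega EB (B_congr_q y Ekk'). Qed.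

Lemma MN_eq0 x : inM x -> inN x -> x = 0.
Proof. by case: L_MN => _; apply. Qed.

Lemma MN_decomp_uniq m n m' n' : inM m -> inN n -> inM m' -> inN n' ->
  m + n = m' + n' -> m = m' /\ n = n'.
Proof.
move=> Mm Nn Mm' Nn' Emn.
have Emm' : m - m' = n' - n by rewrite -(addrK n m) Emn addrAC (addrC m') addrK.
have mm'0 : m - m' = 0.
  by apply: MN_eq0; [apply: inMB | rewrite Emm'; apply: inNB].
by split; apply/eqP; rewrite -subr_eq0 ?mm'0 // -opprB -Emm' mm'0 oppr0.
Qed.

Lemma exists_pM x : exists m, inM m /\ inN (x - m).
Proof.
case: L_MN => decomp _; have [m [n [Mm [Nn ->]]]] := decomp x.
by exists m; rewrite addrC addKr.
Qed.

Definition pM x := proj1_sig (cid (exists_pM x)).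
Definition pN x := x - pM x.

Lemma pM_inM x : inM (pM x). Proof. exact: (proj2_sig (cid (exists_pM x))).1. Qed.
Lemma pN_inN x : inN (pN x). Proof. exact: (proj2_sig (cid (exists_pM x))).2. Qed.
Lemma pMN x : x = pM x + pN x. Proof. by rewrite addrC subrK. Qed.

Lemma q_pN x : q (pN x) = q x.
Proof. by rewrite /pN (linear_mapB q_linear) (q_inM (pM_inM x)) subr0. Qed.

Lemma pM_linear : linear_map pM.
Proof.
move=> a u v.
have Eu : pM (a *: u + v) + pN (a *: u + v) = (a *: pM u + pM v) + (a *: pN u + pN v).
  by rewrite -pMN {1}(pMN u) {1}(pMN v) scalerDr addrACA.
by case: (MN_decomp_uniq (pM_inM _) (pN_inN _) (inM_linear a (pM_inM u) (pM_inM v))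
  (inN_linear a (pN_inN u) (pN_inN v)) Eu).
Qed.

Lemma pN_linear : linear_map pN.
Proof. by move=> a u v; rewrite /pN pM_linear scalerBr addrACA opprD. Qed.

Lemma pN_M m : inM m -> pN m = 0.
Proof.
move=> Mm; have Em : pM m + pN m = m + 0 by rewrite addr0 -pMN.
by case: (MN_decomp_uniq (pM_inM m) (pN_inN m) Mm inN0 Em).
Qed.

Lemma pN_N n : inN n -> pN n = n.
Proof.
move=> Nn; have En : pM n + pN n = 0 + n by rewrite add0r -pMN.
by case: (MN_decomp_uniq (pM_inM n) (pN_inN n) inM0 Nn En).
Qed.

Lemma inM_B_M x : (forall m, inM m -> B m x = 0) -> inM x.
Proof.
move=> BMx z; rewrite (pMN z) (linear_formD (B_linear_l x)) BMx; last exact: pM_inM.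
by rewrite pN_inN addr0.
Qed.

Lemma omega_represents_M (f : L -> R) : linear_form f -> (forall m, inM m -> f m = 0) ->
  exists m, inM m /\ forall y, om m y = f y.
Proof.
move=> f_lin fM0.
have [x omx] := nondegenerate_represents omega_linear_r omega_linear_l omega_nondeg f_lin.
have pNx0 : pN x = 0.
  apply: (MN_eq0 _ (pN_inN x)); apply: inM_B_M => m Mm.
  have : - (2^-1 * B m (pN x)) = 0.
    rewrite -(omega_N _ (pN_inN x)) -(fM0 _ Mm) -omx [in RHS](pMN x).
    by rewrite [in RHS](linear_formD (omega_linear_l m)) (omega_MM (pM_inM x) Mm) add0r.
  by move/eqP; rewrite oppr_eq0 mulf_eq0 (negbTE inv2_neq0) => /eqP.
by exists x; split => //; rewrite (pMN x) pNx0 addr0; apply: pM_inM.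
Qed.

Section ComplexStructure.
Variable J : L -> L.
Hypothesis J_cs : complex_structure B J.

Lemma J_linear : linear_map J. Proof. by case: J_cs. Qed.
Lemma JK x : J (J x) = - x. Proof. by case: J_cs => _ JK _ _; apply: JK. Qed.
Lemma omega_J x y : om (J x) (J y) = om x y. Proof. by case: J_cs => _ _ omJ _; apply: omJ. Qed.
Lemma gJ_gt0 x : x != 0 -> 0 < gJ B J x x. Proof. by case: J_cs => _ _ _; apply. Qed.

Lemma gJ_sym x y : gJ B J x y = gJ B J y x.
Proof. by rewrite /gJ -(omega_J y (J x)) JK (linear_formN (omega_linear_r _)) omega_skew. Qed.

Lemma gJ_linear_r x : linear_form (gJ B J x).
Proof. by move=> a u v; rewrite /gJ J_linear omega_linear_r; ring. Qed.

Lemma gJ_linear_l y : linear_form ((gJ B J)^~ y).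
Proof. by move=> a u v; rewrite /gJ omega_linear_l; ring. Qed.

Lemma omega_J_eq0 x : om x (J x) = 0 -> x = 0.
Proof.
move=> omxJx; apply/eqP; apply: contraT => x_neq0.
by have := gJ_gt0 x_neq0; rewrite /gJ omxJx mulr0 ltxx.
Qed.

Lemma M_JM_eq0 m : inM m -> inM (J m) -> m = 0.
Proof. by move=> Mm MJm; apply/omega_J_eq0/omega_MM. Qed.

Lemma N_JN_eq0 n : inN n -> inN (J n) -> n = 0.
Proof. by move=> Nn NJn; apply/omega_J_eq0/omega_NN. Qed.

Definition J_offdiag x := pN (J (pM x)) + pM (J (pN x)).

Lemma J_offdiag_linear : linear_map J_offdiag.
Proof.
move=> a u v; rewrite /J_offdiag pM_linear J_linear pN_linear pN_linear J_linear pM_linear.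
by rewrite [in RHS]scalerDr [RHS]addrACA.
Qed.

Lemma J_offdiag_eq0 z : J_offdiag z = 0 -> z = 0.
Proof.
move=> Jz0.
have [JN0 JM0] : pM (J (pN z)) = 0 /\ pN (J (pM z)) = 0.
  by apply: MN_decomp_uniq (pM_inM _) (pN_inN _) inM0 inN0 _; rewrite addr0 addrC.
have MJpM : inM (J (pM z)) by rewrite (pMN (J (pM z))) JM0 addr0; apply: pM_inM.
have NJpN : inN (J (pN z)) by rewrite (pMN (J (pN z))) JN0 add0r; apply: pN_inN.
by rewrite (pMN z) (M_JM_eq0 (pM_inM z) MJpM) (N_JN_eq0 (pN_inN z) NJpN) addr0.
Qed.

Lemma J_offdiag_inj : injective J_offdiag.
Proof.
move=> x y Exy; apply/eqP; rewrite -subr_eq0; apply/eqP/J_offdiag_eq0.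
by rewrite (linear_mapB J_offdiag_linear) Exy subrr.
Qed.

(* Lift [phi] to some [n] in [N]; as the injective endomorphism [J_offdiag] is onto, some [x] has
   [J_offdiag x = - pN (J n)], and then [J] maps [pM x + n] into [M]. *)
Lemma exists_lift_JM phi : exists k, q k = phi /\ inM (J k).
Proof.
have [n0 <-] := q_surj phi; pose n := pN n0.
have [x Ex] := linear_map_inj_surj J_offdiag_linear J_offdiag_inj (erefl _) (- pN (J n)).
have pNJ : pN (J (pM x)) = - pN (J n).
  have := congr1 pN Ex; rewrite /J_offdiag (linear_mapD pN_linear) (pN_N (pN_inN _)).
  by rewrite (pN_M (pM_inM _)) addr0 (linear_mapN pN_linear) (pN_N (pN_inN _)).
exists (pM x + n); split.
  by rewrite (linear_mapD q_linear) (q_inM (pM_inM x)) add0r q_pN.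
have pNJ0 : pN (J (pM x + n)) = 0.
  by rewrite (linear_mapD J_linear) (linear_mapD pN_linear) pNJ addNr.
by rewrite (pMN (J (pM x + n))) pNJ0 addr0; apply: pM_inM.
Qed.

Lemma lift_JM_uniq k k' : q k = q k' -> inM (J k) -> inM (J k') -> k = k'.
Proof.
move=> /eq_q Mkk' MJk MJk'; apply/eqP; rewrite -subr_eq0; apply/eqP.
by apply: M_JM_eq0 => //; rewrite (linear_mapB J_linear); apply: inMB.
Qed.

Definition jJ := projT1 (choice exists_lift_JM).

Lemma jJ_q phi : q (jJ phi) = phi. Proof. exact: (projT2 (choice exists_lift_JM) phi).1. Qed.
Lemma jJ_inM phi : inM (J (jJ phi)). Proof. exact: (projT2 (choice exists_lift_JM) phi).2. Qed.

Lemma jJ_linear : linear_map jJ.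
Proof.
move=> a u v; apply: lift_JM_uniq; first by rewrite q_linear !jJ_q.
  exact: jJ_inM.
by rewrite J_linear; apply: inM_linear; apply: jJ_inM.
Qed.

Lemma jJ_is_jJ : is_jJ B q J jJ.
Proof.
split=> [|//|phi]; [exact: jJ_linear | exact: jJ_q |].
by exists (- J (jJ phi)); split; [apply/inMN/jJ_inM | rewrite (linear_mapN J_linear) JK opprK].
Qed.

Lemma is_jJ_eq j : is_jJ B q J j -> j =1 jJ.
Proof.
case=> _ jq jJM phi; apply: lift_JM_uniq; [by rewrite jq jJ_q | | exact: jJ_inM].
by have [m [Mm ->]] := jJM phi; rewrite JK; apply: inMN.
Qed.

Lemma omega_jJ phi psi : om (jJ phi) (jJ psi) = 0.
Proof. by rewrite -omega_J; apply: omega_MM; apply: jJ_inM. Qed.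

Lemma B_jJ_sym phi psi : B (jJ phi) (jJ psi) = B (jJ psi) (jJ phi).
Proof. by rewrite B_omega omega_jJ mulr0 add0r. Qed.

Definition OmegaJ phi psi : R[i] := (gJ B J (jJ phi) (jJ psi) -i* B (jJ phi) (jJ psi))%C.

Lemma OmegaJ_is_OmegaJ : is_OmegaJ B q J OmegaJ.
Proof.
exists jJ; split=> [|x x']; first exact: jJ_is_jJ.
by rewrite realC_subMi (B_congr_q _ (esym (jJ_q (q x')))).
Qed.

Lemma is_OmegaJE Om : is_OmegaJ B q J Om -> Om = OmegaJ.
Proof.
case=> j [/is_jJ_eq Ej EOm]; apply/funext => phi; apply/funext => psi.
have [x <-] := q_surj phi; have [x' <-] := q_surj psi.
by rewrite EOm !Ej realC_subMi (B_congr_q _ (esym (jJ_q (q x')))).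
Qed.

Lemma OmegaJ_sym_posdef : sym_bilinear_posdefRe OmegaJ.
Proof.
split=> [phi psi | phi a u v | phi a u v | phi phi_neq0].
- by rewrite /OmegaJ gJ_sym B_jJ_sym.
- by rewrite /OmegaJ realC_scale_add jJ_linear gJ_linear_r B_linear_r; congr Complex; ring.
- by rewrite /OmegaJ realC_scale_add jJ_linear gJ_linear_l B_linear_l; congr Complex; ring.
- rewrite Re_gt0E /=; apply: gJ_gt0; apply: contraNneq phi_neq0 => jphi0.
  by rewrite -(jJ_q phi) jphi0 (linear_map0 q_linear).
Qed.

End ComplexStructure.

Lemma complex_structure_OmegaJ J : complex_structure B J ->
  (exists! Om, is_OmegaJ B q J Om) /\ (forall Om, is_OmegaJ B q J Om -> sym_bilinear_posdefRe Om).
Proof.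
move=> J_cs; split; last by move=> Om /(is_OmegaJE J_cs) ->; apply: OmegaJ_sym_posdef.
exists (OmegaJ J_cs); split; first exact: OmegaJ_is_OmegaJ.
by move=> Om /(is_OmegaJE J_cs).
Qed.

Section FormToStructure.
Variable Om : Q -> Q -> R[i].
Hypothesis Om_spec : sym_bilinear_posdefRe Om.

(* In [Om = gO -i* bO], [gO] will be [g_J] and [bO] will be [[.,.]], both restricted to [j_J(Q)]. *)
Definition gO phi psi := complex.Re (Om phi psi).
Definition bO phi psi := - complex.Im (Om phi psi).

Lemma OmE phi psi : Om phi psi = (gO phi psi -i* bO phi psi)%C.
Proof. by rewrite /gO /bO opprK; case: (Om phi psi). Qed.

Lemma gO_sym phi psi : gO phi psi = gO psi phi.
Proof. by case: Om_spec => Om_sym _ _ _; rewrite /gO Om_sym. Qed.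

Lemma bO_sym phi psi : bO phi psi = bO psi phi.
Proof. by case: Om_spec => Om_sym _ _ _; rewrite /bO Om_sym. Qed.

Lemma gO_linear_r phi : linear_form (gO phi).
Proof. by case: Om_spec => _ Om_r _ _ a u v; rewrite /gO Om_r Re_scale_add. Qed.

Lemma gO_linear_l psi : linear_form (gO^~ psi).
Proof. by case: Om_spec => _ _ Om_l _ a u v; rewrite /gO Om_l Re_scale_add. Qed.

Lemma bO_linear_r phi : linear_form (bO phi).
Proof. by case: Om_spec => _ Om_r _ _ a u v; rewrite /bO Om_r Im_scale_add; ring. Qed.

Lemma bO_linear_l psi : linear_form (bO^~ psi).
Proof. by case: Om_spec => _ _ Om_l _ a u v; rewrite /bO Om_l Im_scale_add; ring. Qed.

Lemma gO_gt0 phi : phi != 0 -> 0 < gO phi phi.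
Proof. by case: Om_spec => _ _ _ Om_pos /Om_pos; rewrite Re_gt0E. Qed.

Lemma gO_ge0 phi : 0 <= gO phi phi.
Proof.
have [->|/gO_gt0/ltW //] := eqVneq phi 0.
by rewrite (linear_form0 (gO_linear_r 0)).
Qed.

Lemma gO_nondeg : nondegenerate_form gO.
Proof. by move=> psi gO0; apply/eqP; apply: contraT => /gO_gt0; rewrite gO0 ltxx. Qed.

Lemma exists_jO phi : exists k, q k = phi /\ forall y, B k y = bO phi (q y).
Proof.
have half_bO_lin : linear_form (fun y => 2^-1 * bO phi (q y)).
  by move=> a u v; rewrite q_linear bO_linear_r; ring.
have [m [Mm om_m]] : exists m, inM m /\ forall y, om m y = 2^-1 * bO phi (q y).
  apply: omega_represents_M half_bO_lin _ => m Mm.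
  by rewrite (q_inM Mm) (linear_form0 (bO_linear_r phi)) mulr0.
have [x0 qx0] := q_surj phi.
exists (m + pN x0); split; first by rewrite (linear_mapD q_linear) (q_inM Mm) add0r q_pN.
move=> y; rewrite (linear_formD (B_linear_l y)) pN_inN addr0.
by apply: (mulfI inv2_neq0); rewrite -(omega_M _ Mm) om_m.
Qed.

Definition jO := projT1 (choice exists_jO).

Lemma jO_q phi : q (jO phi) = phi. Proof. exact: (projT2 (choice exists_jO) phi).1. Qed.
Lemma jO_B phi y : B (jO phi) y = bO phi (q y). Proof. exact: (projT2 (choice exists_jO) phi).2. Qed.

Lemma jO_linear : linear_map jO.
Proof.
move=> a u v; apply: lift_uniq => [|y]; first by rewrite q_linear !jO_q.
by rewrite B_linear_l !jO_B bO_linear_l.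
Qed.

Lemma omega_jO phi psi : om (jO phi) (jO psi) = 0.
Proof. by rewrite /omega !jO_B !jO_q bO_sym subrr. Qed.

Lemma omega_M_jO m y : inM m -> om m y = om m (jO (q y)).
Proof.
move=> Mm; have My : inM (y - jO (q y)) by apply/eq_q; rewrite jO_q.
by rewrite -{1}(subrK (jO (q y)) y) (linear_formD (omega_linear_r m)) (omega_MM Mm My) add0r.
Qed.

Lemma exists_toM psi : exists m, inM m /\ forall y, om m y = 2^-1 * gO psi (q y).
Proof.
apply: omega_represents_M => [a u v | m Mm]; first by rewrite q_linear gO_linear_r; ring.
by rewrite (q_inM Mm) (linear_form0 (gO_linear_r psi)) mulr0.
Qed.

Definition toM psi := proj1_sig (cid (exists_toM psi)).

Lemma toM_inM psi : inM (toM psi). Proof. exact: (proj2_sig (cid (exists_toM psi))).1. Qed.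
Lemma omega_toM psi y : om (toM psi) y = 2^-1 * gO psi (q y).
Proof. exact: (proj2_sig (cid (exists_toM psi))).2. Qed.

Lemma toM_linear : linear_map toM.
Proof. by move=> a u v; apply: omega_inj => y; rewrite omega_linear_l !omega_toM gO_linear_l; ring. Qed.

Lemma omega_toM_jO psi phi : om (toM psi) (jO phi) = 2^-1 * gO psi phi.
Proof. by rewrite omega_toM jO_q. Qed.

Lemma omega_toM_toM psi phi : om (toM psi) (toM phi) = 0.
Proof. by apply: omega_MM; apply: toM_inM. Qed.

Lemma toM_inj : injective toM.
Proof.
move=> psi psi' Epsi; apply/eqP; rewrite -subr_eq0; apply/eqP; apply: gO_nondeg => phi.
have [y <-] := q_surj phi; have := omega_toM psi y; rewrite Epsi omega_toM => /(mulfI inv2_neq0).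
by rewrite (linear_formB (gO_linear_l _)) => ->; rewrite subrr.
Qed.

Lemma toM_surj m : inM m -> exists psi, toM psi = m.
Proof.
move=> Mm.
have f_lin : linear_form (fun phi => 2 * om m (jO phi)).
  by move=> a u v; rewrite jO_linear omega_linear_r; ring.
have [psi gO_psi] := nondegenerate_represents gO_linear_r gO_linear_l gO_nondeg f_lin.
exists psi; apply: omega_inj => y.
by rewrite omega_toM gO_psi (omega_M_jO y Mm) mulrA mulVf ?pnatr_eq0 // mul1r.
Qed.

Lemma exists_coordM x : exists psi, toM psi = x - jO (q x).
Proof. by apply: toM_surj; apply/eq_q; rewrite jO_q. Qed.

Definition coordM x := proj1_sig (cid (exists_coordM x)).

Lemma toM_coordM x : toM (coordM x) = x - jO (q x).
Proof. exact: (proj2_sig (cid (exists_coordM x))). Qed.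

Lemma decompE x : x = toM (coordM x) + jO (q x).
Proof. by rewrite toM_coordM subrK. Qed.

Lemma coordM_linear : linear_map coordM.
Proof.
move=> a u v; apply: toM_inj.
by rewrite toM_linear !toM_coordM q_linear jO_linear scalerBr addrACA opprD.
Qed.

Lemma coordM_toM psi : coordM (toM psi) = psi.
Proof.
by apply: toM_inj; rewrite toM_coordM (q_inM (toM_inM psi)) (linear_map0 jO_linear) subr0.
Qed.

Lemma coordM_jO phi : coordM (jO phi) = 0.
Proof. by apply: toM_inj; rewrite toM_coordM jO_q subrr (linear_map0 toM_linear). Qed.

Lemma omega_decomp a b c d :
  om (toM a + jO b) (toM c + jO d) = 2^-1 * gO a d - 2^-1 * gO c b.
Proof.
rewrite (linear_formD (omega_linear_l _)) !(linear_formD (omega_linear_r _)).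
by rewrite omega_toM_toM omega_jO omega_toM_jO (omega_skew (toM c)) omega_toM_jO; ring.
Qed.

Definition JO x := jO (coordM x) - toM (q x).

Lemma JO_decomp x : JO x = toM (- q x) + jO (coordM x).
Proof. by rewrite /JO (linear_mapN toM_linear) addrC. Qed.

Lemma JO_linear : linear_map JO.
Proof.
move=> a u v; rewrite /JO coordM_linear jO_linear q_linear toM_linear.
by rewrite scalerBr addrACA opprD.
Qed.

Lemma q_JO x : q (JO x) = coordM x.
Proof. by rewrite /JO (linear_mapB q_linear) jO_q (q_inM (toM_inM _)) subr0. Qed.

Lemma coordM_JO x : coordM (JO x) = - q x.
Proof. by rewrite JO_decomp (linear_mapD coordM_linear) coordM_toM coordM_jO addr0. Qed.

Lemma JO_jO phi : JO (jO phi) = - toM phi.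
Proof. by rewrite /JO coordM_jO jO_q (linear_map0 jO_linear) sub0r. Qed.

Lemma JOK x : JO (JO x) = - x.
Proof.
by rewrite {1}/JO coordM_JO q_JO (linear_mapN jO_linear) -opprD addrC -decompE.
Qed.

Lemma omega_JO x y : om (JO x) (JO y) = om x y.
Proof.
rewrite !JO_decomp [in RHS](decompE x) [in RHS](decompE y) !omega_decomp.
by rewrite !(linear_formN (gO_linear_l _)) (gO_sym (q x)) (gO_sym (q y)); ring.
Qed.

Lemma gJ_JO_gt0 x : x != 0 -> 0 < gJ B JO x x.
Proof.
move=> x_neq0; rewrite /gJ {1}(decompE x) JO_decomp omega_decomp (linear_formN (gO_linear_l _)).
have gc_ge0 := gO_ge0 (coordM x); have gq_ge0 := gO_ge0 (q x).
have [c0|/gO_gt0 gc_gt0] := eqVneq (coordM x) 0; last by lra.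
have [qx0|/gO_gt0 gq_gt0] := eqVneq (q x) 0; last by lra.
move: x_neq0; rewrite (decompE x) c0 qx0.
by rewrite (linear_map0 toM_linear) (linear_map0 jO_linear) addr0 eqxx.
Qed.

Lemma JO_cs : complex_structure B JO.
Proof. by split; [exact: JO_linear | exact: JOK | exact: omega_JO | exact: gJ_JO_gt0]. Qed.

Lemma jO_is_jJ : is_jJ B q JO jO.
Proof.
split=> [||phi]; [exact: jO_linear | exact: jO_q |].
by exists (toM phi); split; [exact: toM_inM | rewrite /JO coordM_toM (q_inM (toM_inM _)) (linear_map0 toM_linear) subr0].
Qed.

Lemma JO_is_OmegaJ : is_OmegaJ B q JO Om.
Proof.
exists jO; split=> [|x x']; first exact: jO_is_jJ.
rewrite realC_subMi OmE jO_B; congr Complex.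
rewrite /gJ JO_jO (linear_formN (omega_linear_r _)) omega_skew opprK omega_toM_jO gO_sym.
by rewrite mulrA divff ?pnatr_eq0 // mul1r.
Qed.

Lemma complex_structure_eq_JO J : complex_structure B J -> is_OmegaJ B q J Om -> J = JO.
Proof.
move=> J_cs /(is_OmegaJE J_cs) EOm.
have EjO phi : jJ J_cs phi = jO phi.
  apply: lift_uniq => [|y]; first by rewrite jJ_q jO_q.
  by rewrite jO_B /bO EOm /= opprK (B_congr_q _ (esym (jJ_q J_cs (q y)))).
have JtoM psi : J (toM psi) = jO psi.
  pose m := - J (jJ J_cs psi).
  have Mm : inM m by apply/inMN/jJ_inM.
  have Jm : J m = jJ J_cs psi by rewrite (linear_mapN (J_linear J_cs)) (JK J_cs) opprK.
  suff -> : toM psi = m by rewrite Jm EjO.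
  apply: omega_inj => y; rewrite omega_toM (omega_M_jO y Mm) -(omega_J J_cs) Jm -EjO.
  by rewrite /gO EOm /= /gJ mulrA mulVf ?pnatr_eq0 // mul1r.
apply/funext => x; rewrite {1}(decompE x) (linear_mapD (J_linear J_cs)) JtoM.
by rewrite -(JtoM (q x)) (JK J_cs).
Qed.

Lemma sym_posdef_complex_structure :
  exists! J, complex_structure B J /\ is_OmegaJ B q J Om.
Proof.
exists JO; split=> [|J [J_cs OmJ]]; first by split; [exact: JO_cs | exact: JO_is_OmegaJ].
by rewrite (complex_structure_eq_JO J_cs OmJ).
Qed.

End FormToStructure.

End Setting.

Theorem proposition3p3 (R : realType) (L : vectType R) (B : L -> L -> R)
    (Q : vectType R) (q : L -> Q) :
  bilinear_form B ->
  nondegenerate_form (omega B) ->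
  direct_sum_MN B ->
  quotient_map_by_M B q ->
  (forall J : L -> L, complex_structure B J ->
     (exists! Om : Q -> Q -> R[i], is_OmegaJ B q J Om) /\
     (forall Om : Q -> Q -> R[i], is_OmegaJ B q J Om -> sym_bilinear_posdefRe Om)) /\
  (forall Om : Q -> Q -> R[i], sym_bilinear_posdefRe Om ->
     exists! J : L -> L, complex_structure B J /\ is_OmegaJ B q J Om).
Proof.
move=> B_bilinear omega_nondeg L_MN q_quotient; split=> [J J_cs | Om Om_spec].
  exact: complex_structure_OmegaJ.
exact: sym_posdef_complex_structure.
Qed.
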